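(* Let $S$ be an $E$-solid locally inverse semigroup, $\rho$ an inverse semigroup congruence on $S$ whose idempotent classes are completely simple subsemigroups, $T=S/\rho$, and let $\mathcal C$ be the derived semigroupoid. Let $(\alpha,s,\beta)\in T\times S\times T$. (1) $(\alpha,s,\beta)$ is an arrow of $\mathcal C$ if and only if $\alpha\,\mathcal R\,\beta$ in $T$ and $s\rho\ge\alpha^{-1}\beta$. (2) If $(\alpha,s,\beta)$ is an arrow of $\mathcal C$ then $s\rho(s\rho)^{-1}\ge\alpha^{-1}\alpha$ and $(s\rho)^{-1}s\rho\ge\beta^{-1}\beta$ in $T$. (3) If $(\alpha,s,\beta)$ is an arrow of $\mathcal C$ then the following are equivalent: (a) $s\rho=\alpha^{-1}\beta$; (b) $s\rho(s\rho)^{-1}=\alpha^{-1}\alpha$; (c) $(s\rho)^{-1}s\rho=\beta^{-1}\beta$.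
   Context: The derived semigroupoid $\mathcal C$ has object set $T$ and, for $\alpha,\beta\in T$, arrow set $\mathcal C(\alpha,\beta)=\{(\alpha,s,\beta)\in T\times S\times T:\alpha\cdot s\rho=\beta,\ \beta\cdot(s\rho)^{-1}=\alpha\}$, with composition $(\alpha,s,\beta)\circ(\beta,t,\gamma)=(\alpha,st,\gamma)$. The order on $T$ is the natural partial order of the inverse semigroup $T$; $\mathcal R$ is Green's relation. Locally inverse: regular with every $eSe$ inverse; $E$-solid: idempotent-generated subsemigroup completely regular. *)

Definition associative {A : Type} (mul : A -> A -> A) : Prop :=
  forall x y z, mul x (mul y z) = mul (mul x y) z.

Definition idempotent {A : Type} (mul : A -> A -> A) (e : A) : Prop :=
  mul e e = e.

Definition is_inverse {A : Type} (mul : A -> A -> A) (a b : A) : Prop :=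
  mul (mul a b) a = a /\ mul (mul b a) b = b.

Definition inverse_semigroup {A : Type} (mul : A -> A -> A) (inv : A -> A) : Prop :=
  associative mul /\
  (forall a, is_inverse mul a (inv a)) /\
  (forall a b, is_inverse mul a b -> b = inv a).

Definition nat_le {A : Type} (mul : A -> A -> A) (a b : A) : Prop :=
  exists e, idempotent mul e /\ a = mul e b.

(** Green's relation R: a S^1 = b S^1. *)
Definition greenR {A : Type} (mul : A -> A -> A) (a b : A) : Prop :=
  (a = b \/ exists x, a = mul b x) /\ (b = a \/ exists y, b = mul a y).

Definition regular {A : Type} (mul : A -> A -> A) : Prop :=
  forall a, exists x, mul (mul a x) a = a.

Definition in_local {A : Type} (mul : A -> A -> A) (e a : A) : Prop :=
  exists s, a = mul (mul e s) e.

(** Locally inverse: regular and every eSe (e idempotent) is an inverse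
    semigroup, i.e. each element of eSe has a unique inverse within eSe. *)
Definition locally_inverse {A : Type} (mul : A -> A -> A) : Prop :=
  regular mul /\
  forall e, idempotent mul e ->
    forall a, in_local mul e a ->
      exists b, (in_local mul e b /\ is_inverse mul a b) /\
        forall b', in_local mul e b' -> is_inverse mul a b' -> b' = b.

Inductive in_genE {A : Type} (mul : A -> A -> A) : A -> Prop :=
  | genE_idem : forall e, idempotent mul e -> in_genE mul e
  | genE_mul : forall x y, in_genE mul x -> in_genE mul y -> in_genE mul (mul x y).

Definition completely_regular_sub {A : Type} (mul : A -> A -> A) (P : A -> Prop) : Prop :=
  forall a, P a -> exists x, P x /\ mul (mul a x) a = a /\ mul a x = mul x a.

Definition E_solid {A : Type} (mul : A -> A -> A) : Prop :=
  completely_regular_sub mul (in_genE mul).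

Definition subsemigroup {A : Type} (mul : A -> A -> A) (P : A -> Prop) : Prop :=
  forall x y, P x -> P y -> P (mul x y).

(** Completely simple subsemigroup (Howie): P is a subsemigroup which is simple
    (its only ideal is itself) and contains a primitive idempotent. *)
Definition ideal_of {A : Type} (mul : A -> A -> A) (P I : A -> Prop) : Prop :=
  (exists x, I x) /\ (forall x, I x -> P x) /\
  (forall x y, P x -> I y -> I (mul x y) /\ I (mul y x)).

Definition simple_sub {A : Type} (mul : A -> A -> A) (P : A -> Prop) : Prop :=
  forall I, ideal_of mul P I -> forall x, P x -> I x.

Definition primitive_idem_in {A : Type} (mul : A -> A -> A) (P : A -> Prop) (e : A) : Prop :=
  P e /\ idempotent mul e /\
  forall f, P f -> idempotent mul f -> mul e f = f -> mul f e = f -> f = e.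

Definition completely_simple_sub {A : Type} (mul : A -> A -> A) (P : A -> Prop) : Prop :=
  (exists x, P x) /\ subsemigroup mul P /\ simple_sub mul P /\
  exists e, primitive_idem_in mul P e.

Definition congruence {A : Type} (mul : A -> A -> A) (rho : A -> A -> Prop) : Prop :=
  (forall x, rho x x) /\ (forall x y, rho x y -> rho y x) /\
  (forall x y z, rho x y -> rho y z -> rho x z) /\
  (forall x y z, rho x y -> rho (mul z x) (mul z y) /\ rho (mul x z) (mul y z)).

(** The quotient S/rho is modelled by a surjective homomorphism [phi : S -> T]
    whose kernel is exactly rho; [phi s] plays the role of the class s rho. *)
Definition quotient_map {S T : Type} (mulS : S -> S -> S) (mulT : T -> T -> T)
  (rho : S -> S -> Prop) (phi : S -> T) : Prop :=
  (forall x y, phi (mulS x y) = mulT (phi x) (phi y)) /\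
  (forall t, exists s, phi s = t) /\
  (forall x y, phi x = phi y <-> rho x y).

Definition derived_arrow {S T : Type} (mulT : T -> T -> T) (invT : T -> T)
  (phi : S -> T) (alpha : T) (s : S) (beta : T) : Prop :=
  mulT alpha (phi s) = beta /\ mulT beta (invT (phi s)) = alpha.

(* Only the inverse semigroup T matters: with a := s rho, every claim is an
   identity between a, alpha and beta.  Idempotents of T commute, [x <= y] iff
   [x = x x^-1 y], and [alpha R beta] gives [alpha alpha^-1 = beta beta^-1].
   For an arrow, [alpha a = beta] and [beta a^-1 = alpha] yield
   [beta^-1 beta = a^-1 (alpha^-1 alpha) a] and
   [alpha^-1 alpha = a (beta^-1 beta) a^-1], which give (2) and (3); conversely
   [alpha^-1 beta <= a] reads [alpha^-1 beta = alpha^-1 alpha a], and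
   multiplying by alpha recovers the arrow. *)


Set Implicit Arguments.

Section InverseSemigroup.

Variables (A : Type) (mul : A -> A -> A) (inv : A -> A).
Hypothesis invA : inverse_semigroup mul inv.

Local Infix "*" := mul.

Lemma mulA x y z : x * (y * z) = x * y * z.
Proof. apply invA. Qed.

Lemma mul_inv_mul a : a * (inv a * a) = a.
Proof. rewrite mulA; apply (proj1 (proj2 invA) a). Qed.

Lemma inv_mul_inv a : inv a * (a * inv a) = inv a.
Proof. rewrite mulA; apply (proj1 (proj2 invA) a). Qed.

Lemma mul_inv_mul_r a z : a * (inv a * (a * z)) = a * z.
Proof. rewrite (mulA (inv a)), mulA, mul_inv_mul; reflexivity. Qed.

Lemma inv_mul_inv_r a z : inv a * (a * (inv a * z)) = inv a * z.
Proof. rewrite (mulA a), mulA, inv_mul_inv; reflexivity. Qed.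

Lemma inv_unique a b : a * (b * a) = a -> b * (a * b) = b -> b = inv a.
Proof. rewrite !mulA; intros; apply invA; split; assumption. Qed.

Lemma invK a : inv (inv a) = a.
Proof. symmetry; apply inv_unique; [apply inv_mul_inv | apply mul_inv_mul]. Qed.

Lemma inv_idem e : idempotent mul e -> inv e = e.
Proof. intro He; symmetry; apply inv_unique; rewrite !He; reflexivity. Qed.

Lemma idem_mulK e z : idempotent mul e -> e * (e * z) = e * z.
Proof. intro He; rewrite mulA, He; reflexivity. Qed.

Lemma idem_mulV a : idempotent mul (a * inv a).
Proof. unfold idempotent; rewrite <- mulA, inv_mul_inv; reflexivity. Qed.

Lemma idem_Vmul a : idempotent mul (inv a * a).
Proof. unfold idempotent; rewrite <- mulA, mul_inv_mul; reflexivity. Qed.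

(* [f (ef)^-1 e] is an idempotent inverse of [ef], hence equal to [(ef)^-1]. *)
Lemma idem_mul e f :
  idempotent mul e -> idempotent mul f -> idempotent mul (e * f).
Proof.
  intros He Hf.
  set (x := inv (e * f)).
  assert (Hxefx : x * (e * (f * x)) = x).
  { rewrite (mulA e); apply inv_mul_inv. }
  assert (Hfxe : f * (x * (e * (f * (x * e)))) = f * (x * e)).
  { rewrite (mulA f x e), (mulA e), (mulA x), Hxefx; apply mulA. }
  assert (Hx : f * (x * e) = x).
  { apply inv_unique; rewrite <- !mulA, (idem_mulK _ Hf), (idem_mulK _ He).
    - rewrite (mulA e); apply mul_inv_mul.
    - exact Hfxe. }
  assert (Hxx : x * x = x).
  { transitivity (f * (x * e) * (f * (x * e))); [rewrite Hx; reflexivity|].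
    rewrite <- !mulA, Hfxe; exact Hx. }
  assert (Eef : e * f = x).
  { rewrite <- (inv_idem Hxx); symmetry; apply invK. }
  unfold idempotent; rewrite Eef; exact Hxx.
Qed.

Lemma idem_mulC e f :
  idempotent mul e -> idempotent mul f -> e * f = f * e.
Proof.
  intros He Hf.
  pose proof (idem_mul He Hf) as Hef.
  pose proof (idem_mul Hf He) as Hfe.
  rewrite <- (inv_idem Hef).
  symmetry; apply inv_unique; rewrite <- !mulA, (idem_mulK _ Hf), (idem_mulK _ He);
    [revert Hef | revert Hfe]; unfold idempotent; rewrite <- !mulA; trivial.
Qed.

Lemma mulV_Vmul_comm a b z :
  a * (inv a * (inv b * (b * z))) = inv b * (b * (a * (inv a * z))).
Proof.
  transitivity (a * inv a * (inv b * b) * z); [rewrite <- !mulA; reflexivity|].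
  rewrite (idem_mulC (idem_mulV a) (idem_Vmul b)).
  rewrite <- !mulA; reflexivity.
Qed.

Lemma invM a b : inv (a * b) = inv b * inv a.
Proof.
  symmetry; apply inv_unique; rewrite <- !mulA.
  - rewrite mulV_Vmul_comm, mul_inv_mul_r, mul_inv_mul; reflexivity.
  - rewrite <- mulV_Vmul_comm, inv_mul_inv_r, inv_mul_inv; reflexivity.
Qed.

Lemma Vmul_mul x y : inv (x * y) * (x * y) = inv y * (inv x * x * y).
Proof. rewrite invM, <- !mulA; reflexivity. Qed.

Lemma mulV_absorb x y :
  (x = y \/ exists w, x = y * w) -> y * inv y * (x * inv x) = x * inv x.
Proof.
  intro Hxy.
  transitivity (y * (inv y * x) * inv x); [rewrite <- !mulA; reflexivity|].
  destruct Hxy as [-> | [w ->]]; rewrite ?mul_inv_mul, ?mul_inv_mul_r; reflexivity.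
Qed.

Lemma greenR_mulV x y : greenR mul x y -> x * inv x = y * inv y.
Proof.
  intros [Hxy Hyx].
  rewrite <- (mulV_absorb Hxy), (idem_mulC (idem_mulV y) (idem_mulV x)).
  apply mulV_absorb; exact Hyx.
Qed.

Lemma greenR_sym x y : greenR mul x y -> greenR mul y x.
Proof. intros [Hxy Hyx]; split; assumption. Qed.

Lemma greenR_mulV_r x y : greenR mul x y -> x * (inv x * y) = y.
Proof.
  intro HR; rewrite mulA, (greenR_mulV HR), <- mulA; apply mul_inv_mul.
Qed.

Lemma greenR_Vmul_mulV x y :
  greenR mul x y -> inv x * y * inv (inv x * y) = inv x * x.
Proof.
  intro HR.
  transitivity (inv x * (y * inv y) * x); [rewrite invM, invK, <- !mulA; reflexivity|].
  rewrite <- (greenR_mulV HR), <- !mulA; apply inv_mul_inv_r.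
Qed.

Lemma nat_leP x y : nat_le mul x y <-> x = x * inv x * y.
Proof.
  split.
  - intros [e [He ->]]; symmetry.
    rewrite invM, (inv_idem He).
    transitivity (e * (y * inv y * e) * y); [rewrite <- !mulA; reflexivity|].
    rewrite <- (idem_mulC He (idem_mulV y)), <- !mulA, (idem_mulK _ He), mul_inv_mul.
    reflexivity.
  - intro Hx; exists (x * inv x); split; [apply idem_mulV | exact Hx].
Qed.

Section DerivedArrow.

Variables (al a be : A).

Lemma arrow_of_greenR_le :
  greenR mul al be -> nat_le mul (inv al * be) a -> al * a = be /\ be * inv a = al.
Proof.
  intros HR Hle.
  apply nat_leP in Hle; rewrite (greenR_Vmul_mulV HR) in Hle.
  assert (Hab : al * a = be).
  { transitivity (al * (inv al * be)); [|apply greenR_mulV_r; exact HR].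
    rewrite Hle, <- !mulA, mul_inv_mul_r; reflexivity. }
  split; [exact Hab|].
  (* [al = be (inv al be)^-1] and [(inv al be)^-1 = a^-1 (inv al al)]. *)
  assert (Hinv : inv be * al = inv a * (inv al * al)).
  { transitivity (inv (inv al * be)); [rewrite invM, invK; reflexivity|].
    rewrite Hle, invM, (inv_idem (idem_Vmul al)); reflexivity. }
  symmetry.
  transitivity (be * (inv be * al)); [symmetry; apply greenR_mulV_r, greenR_sym, HR|].
  rewrite Hinv, <- Hab.
  transitivity (al * (a * inv a * (inv al * al))); [rewrite <- !mulA; reflexivity|].
  rewrite (idem_mulC (idem_mulV a) (idem_Vmul al)), <- !mulA, mul_inv_mul_r, !mulA.
  reflexivity.
Qed.

Hypotheses (Hab : al * a = be) (Hba : be * inv a = al).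

Lemma arrow_greenR : greenR mul al be.
Proof. split; right; [exists (inv a) | exists a]; symmetry; assumption. Qed.

Lemma arrow_le : nat_le mul (inv al * be) a.
Proof.
  exists (inv al * al); split; [apply idem_Vmul|].
  rewrite <- Hab; apply mulA.
Qed.

Lemma arrow_le_mulV : nat_le mul (inv al * al) (a * inv a).
Proof.
  exists (inv al * al); split; [apply idem_Vmul|].
  rewrite <- mulA, (mulA al), Hab, Hba; reflexivity.
Qed.

Lemma arrow_le_Vmul : nat_le mul (inv be * be) (inv a * a).
Proof.
  exists (inv be * be); split; [apply idem_Vmul|].
  rewrite <- mulA, (mulA be), Hba, Hab; reflexivity.
Qed.

Lemma arrow_eq_iff_mulV : a = inv al * be <-> a * inv a = inv al * al.
Proof.
  split.
  - intro Ea; rewrite Ea; apply greenR_Vmul_mulV, arrow_greenR.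
  - intro E.
    transitivity (a * inv a * a); [rewrite <- mulA, mul_inv_mul; reflexivity|].
    rewrite E, <- mulA, Hab; reflexivity.
Qed.

Lemma arrow_mulV_iff_Vmul : a * inv a = inv al * al <-> inv a * a = inv be * be.
Proof.
  split; intro E.
  - assert (Hbe : inv be * be = inv a * (inv al * al * a)).
    { rewrite <- Hab; apply Vmul_mul. }
    rewrite Hbe, <- E, <- (mulA a (inv a) a), mul_inv_mul; reflexivity.
  - assert (Hal : inv al * al = a * (inv be * be * inv a)).
    { rewrite <- Hba, Vmul_mul, invK; reflexivity. }
    rewrite Hal, <- E, <- (mulA (inv a) a (inv a)), inv_mul_inv; reflexivity.
Qed.

End DerivedArrow.

End InverseSemigroup.

Theorem lemma5p1
  (S : Type) (mulS : S -> S -> S)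
  (T : Type) (mulT : T -> T -> T) (invT : T -> T)
  (rho : S -> S -> Prop) (phi : S -> T)
  (HS_assoc : associative mulS)
  (HS_li : locally_inverse mulS)
  (HS_Es : E_solid mulS)
  (Hrho : congruence mulS rho)
  (HT : inverse_semigroup mulT invT)
  (Hphi : quotient_map mulS mulT rho phi)
  (Hcs : forall e : T, idempotent mulT e ->
           completely_simple_sub mulS (fun x => phi x = e))
  (alpha : T) (s : S) (beta : T) :
  (derived_arrow mulT invT phi alpha s beta <->
     greenR mulT alpha beta /\ nat_le mulT (mulT (invT alpha) beta) (phi s)) /\
  (derived_arrow mulT invT phi alpha s beta ->
     nat_le mulT (mulT (invT alpha) alpha) (mulT (phi s) (invT (phi s))) /\
     nat_le mulT (mulT (invT beta) beta) (mulT (invT (phi s)) (phi s))) /\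
  (derived_arrow mulT invT phi alpha s beta ->
     (phi s = mulT (invT alpha) beta <->
        mulT (phi s) (invT (phi s)) = mulT (invT alpha) alpha) /\
     (mulT (phi s) (invT (phi s)) = mulT (invT alpha) alpha <->
        mulT (invT (phi s)) (phi s) = mulT (invT beta) beta)).
Proof.
  unfold derived_arrow.
  split; [split | split].
  - intros [Hab Hba]; split; [eapply arrow_greenR | eapply arrow_le]; eassumption.
  - intros [HR Hle]; eapply arrow_of_greenR_le; eassumption.
  - intros [Hab Hba]; split; [eapply arrow_le_mulV | eapply arrow_le_Vmul]; eassumption.
  - intros [Hab Hba]; split; [eapply arrow_eq_iff_mulV | eapply arrow_mulV_iff_Vmul];
      eassumption.
Qed.
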